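(* Let $G$ be a finite group. Then $\mathrm{Core}(G)$ is simply connected if and only if $G$ is cyclic of odd order.
   Context: For a group $G$, $\mathrm{Core}(G)$ is the quandle on $G$ with $x*y=xy^{-1}x$. A quandle is a set $Q$ with a binary operation $*$ such that every left translation $L_x:y\mapsto x*y$ is bijective, $x*(y*z)=(x*y)*(x*z)$ and $x*x=x$; $Q$ is connected if $\langle L_x:x\in Q\rangle$ is transitive on $Q$. For a set $S$, a quandle cocycle with values in $\mathrm{Sym}_S$ is $\theta:Q\times Q\to\mathrm{Sym}_S$ with $\theta_{x*y,x*z}\theta_{x,z}=\theta_{x,y*z}\theta_{y,z}$ and $\theta_{x,x}=1$; it is cohomologous to the trivial cocycle if there is $\gamma:Q\to\mathrm{Sym}_S$ with $\theta_{x,y}=\gamma_{x*y}\gamma_y^{-1}$ for all $x,y$. $Q$ is simply connected if it is connected and, for every set $S$, every such cocycle is cohomologous to the trivial cocycle. *)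

From mathcomp Require Import all_boot all_fingroup.
Set Implicit Arguments. Unset Strict Implicit. Unset Printing Implicit Defensive.

Definition is_quandle (Q : Type) (op : Q -> Q -> Q) : Prop :=
  [/\ (forall x, bijective (op x)),
      (forall x y z, op x (op y z) = op (op x y) (op x z)) &
      (forall x, op x x = x)].

(* Orbit relation of the group generated by the left translations L_x
   (words in the L_x and their inverses). *)
Inductive lreach (Q : Type) (op : Q -> Q -> Q) (a : Q) : Q -> Prop :=
  | lreach_refl : lreach op a a
  | lreach_L x b : lreach op a b -> lreach op a (op x b)
  | lreach_Linv x b : lreach op a (op x b) -> lreach op a b.

Definition quandle_connected (Q : Type) (op : Q -> Q -> Q) : Prop :=
  is_quandle op /\ forall a b : Q, lreach op a b.

(* A quandle cocycle with values in Sym_S: theta x y is a permutation of S;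
   the product in Sym_S is composition (sigma tau = sigma \o tau), and
   equality of permutations is pointwise equality. *)
Definition quandle_cocycle (Q S : Type) (op : Q -> Q -> Q)
    (theta : Q -> Q -> S -> S) : Prop :=
  [/\ (forall x y, bijective (theta x y)),
      (forall x y z, theta (op x y) (op x z) \o theta x z
                     =1 theta x (op y z) \o theta y z) &
      (forall x, theta x x =1 id)].

Definition cohomologous_trivial (Q S : Type) (op : Q -> Q -> Q)
    (theta : Q -> Q -> S -> S) : Prop :=
  exists (gamma gammainv : Q -> S -> S),
    [/\ (forall x, cancel (gamma x) (gammainv x)),
        (forall x, cancel (gammainv x) (gamma x)) &
        (forall x y, theta x y =1 gamma (op x y) \o gammainv y)].

Definition simply_connected (Q : Type) (op : Q -> Q -> Q) : Prop :=
  quandle_connected op /\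
  forall (S : Type) (theta : Q -> Q -> S -> S),
    quandle_cocycle op theta -> cohomologous_trivial op theta.

Definition core_op (gT : finGroupType) (x y : gT) : gT := (x * y^-1 * x)%g.

(* A trivialization gamma of a cocycle theta on Core(G) can be transported
   along the twisted conjugations z |-> g z g = g * (1 * z); around the loop
   through g = (ab)^-1, b, a, ab, b^-1, a^-1, which returns to 1 in every
   group, the transported monodromy must be the identity.  For the cocycle
   (x, y) |-> L_x L_y this says that commutators are central, and for the
   cocycle t |-> w(x, y) t attached to an alternating bimultiplicative form w
   it says that w^4 = 1.  Applied to the commutator form, and using that
   connectivity writes every element as a square times a commutator, this
   makes G abelian; all elements are then squares, so |G| is odd.  If G were
   not cyclic, the determinant of two Z/p-coordinates of G would be a form
   with w^4 <> 1 since p is odd.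
   Conversely, let G = <g> have odd order and h^2 = g.  In the extension
   G x S, where L_x lifts to (z, t) |-> (x * z, theta x z t), the lift of
   L_h L_1 translates the first coordinate by g and has period |G| on the
   fibre over 1; its iterates starting from (1, t) form the trivialization. *)
From mathcomp Require Import all_boot all_fingroup all_solvable.
From mathcomp Require Import ssralg zmodp ring.
From Stdlib Require Import IndefiniteDescription.
Set Implicit Arguments. Unset Strict Implicit. Unset Printing Implicit Defensive.
Local Open Scope group_scope.

Ltac gsimpl := rewrite ?(invMg, invgK, invg1, mulgA);
  rewrite ?(mulgV, mulVg, mul1g, mulg1, mulgK, mulgKV, invg1, mulgA).

Section CoreQuandle.
Variable gT : finGroupType.
Implicit Types x y z : gT.

Lemma core_opK x : involutive (@core_op gT x).
Proof. by move=> y; rewrite /core_op; gsimpl. Qed.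

Lemma core_op_sd x y z : core_op x (core_op y z) = core_op (core_op x y) (core_op x z).
Proof. by rewrite /core_op; gsimpl. Qed.

Lemma core_opxx x : core_op x x = x.
Proof. by rewrite /core_op; gsimpl. Qed.

Lemma core_quandle : is_quandle (@core_op gT).
Proof.
split=> [x | | ]; [exact: inv_bij (core_opK x) | exact: core_op_sd | exact: core_opxx].
Qed.

Lemma core_op1 z : core_op 1 z = z^-1.
Proof. by rewrite /core_op mul1g mulg1. Qed.

Lemma core_op_twist g z : core_op g (core_op 1 z) = g * z * g.
Proof. by rewrite core_op1 /core_op invgK. Qed.

End CoreQuandle.

Section TwistMonodromy.
Variables (gT : finGroupType) (S : Type) (theta : gT -> gT -> S -> S).

Definition twist (z g : gT) := g * z * g.

(* theta g z^-1 \o theta 1 z covers z |-> z^-1 |-> g * z * g. *)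
Fixpoint twist_monodromy (z : gT) (gs : seq gT) : S -> S :=
  if gs is g :: gs' then twist_monodromy (twist z g) gs' \o theta g z^-1 \o theta 1 z
  else id.

Lemma twist_monodromy_transport (gamma : gT -> S -> S) :
    (forall x y, theta x y \o gamma y =1 gamma (core_op x y)) ->
  forall z gs, gamma (foldl twist z gs) =1 twist_monodromy z gs \o gamma z.
Proof.
move=> gammaP z gs; elim: gs z => [|g gs IHgs] z s //=.
by rewrite IHgs /= /twist -core_op_twist -(gammaP g) /= -(gammaP 1) /= core_op1.
Qed.

Definition commutator_loop (a b : gT) := [:: (a * b)^-1; b; a; a * b; b^-1; a^-1].

Lemma commutator_loop_closed a b : foldl twist 1 (commutator_loop a b) = 1.
Proof. by rewrite /= /twist; gsimpl. Qed.

Lemma simply_connected_commutator_loop :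
    simply_connected (@core_op gT) -> quandle_cocycle (@core_op gT) theta ->
  forall a b, twist_monodromy 1 (commutator_loop a b) =1 id.
Proof.
move=> sc theta_cocycle a b t.
have [gamma [gammainv [gammaK gammainvK thetaE]]] := sc.2 S theta theta_cocycle.
have gammaP x y : theta x y \o gamma y =1 gamma (core_op x y).
  by move=> s; rewrite /= thetaE /= gammaK.
have := twist_monodromy_transport gammaP 1 (commutator_loop a b) (gammainv 1 t).
by rewrite commutator_loop_closed /= gammainvK.
Qed.

End TwistMonodromy.

Section AlternatingForm.
Variables (gT aT : finGroupType) (form : gT -> gT -> aT).
Hypothesis formMl : forall x y z, form (x * y) z = form x z * form y z.
Hypothesis formMr : forall x y z, form x (y * z) = form x y * form x z.
Hypothesis form_alt : forall x, form x x = 1.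
Hypothesis form_comm : forall x y z w, commute (form x y) (form z w).

Lemma form1l z : form 1 z = 1.
Proof. by apply: (@mulgI _ (form 1 z)); rewrite -formMl !mulg1. Qed.

Lemma form1r x : form x 1 = 1.
Proof. by apply: (@mulgI _ (form x 1)); rewrite -formMr !mulg1. Qed.

Lemma formVl x z : form x^-1 z = (form x z)^-1.
Proof. by apply: (@mulgI _ (form x z)); rewrite -formMl mulgV form1l mulgV. Qed.

Lemma formVr x z : form x z^-1 = (form x z)^-1.
Proof. by apply: (@mulgI _ (form x z)); rewrite -formMr mulgV form1r mulgV. Qed.

Lemma form_skew x y : form y x = (form x y)^-1.
Proof.
apply: (@mulgI _ (form x y)); rewrite mulgV.
by have := form_alt (x * y); rewrite !formMl !formMr !form_alt mul1g mulg1.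
Qed.

Lemma alt_form_cocycle : quandle_cocycle (@core_op gT) (fun x y t => form x y * t).
Proof.
split=> [x y | x y z t | x t] /=; last by rewrite form_alt mul1g.
  by apply: (@Bijective _ _ _ (mulg (form x y)^-1)) => t; rewrite ?mulKg ?mulKVg.
rewrite !mulgA; congr (_ * t); rewrite /core_op.
rewrite !formMl !formMr !formVl !formVr !form_alt ?invg1 ?mulg1 ?mul1g.
rewrite (form_skew x y) !invgK mulgKV.
have cPQ : commute (form x z)^-1 (form x y) by apply/commute_sym/commuteV.
by rewrite !mulgA cPQ -!mulgA [form y z * _]form_comm !mulgA.
Qed.

Lemma simply_connected_alt_form_exp4 :
  simply_connected (@core_op gT) -> forall a b, form a b ^+ 4 = 1.
Proof.
move=> sc a b.
have monodromy_step g z t : form g z^-1 * (form 1 z * t) = (form g z)^-1 * t.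
  by rewrite formVr form1l mul1g.
have := simply_connected_commutator_loop sc alt_form_cocycle a b 1.
rewrite /= !monodromy_step /twist !mulg1.
rewrite ?(invMg, invgK, mulg1, mul1g, formMl, formMr, formVl, formVr,
          form_alt, form1l, form1r) (form_skew a b).
move: (form a b) => q; gsimpl.
move/(congr1 invg); rewrite !invMg !invgK invg1 => <-.
by rewrite !expgS expg0 mulg1 !mulgA.
Qed.

End AlternatingForm.

Section SimplyConnectedCore.
Variable gT : finGroupType.
Implicit Types a b c u w x y z : gT.

Lemma core_adjoint_cocycle :
  quandle_cocycle (@core_op gT) (fun x y => core_op x \o core_op y).
Proof.
split=> [x y | x y z t | x t] /=; last exact: core_opK.
  by apply: (@Bijective _ _ _ (core_op y \o core_op x)) => t /=; rewrite !core_opK.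
by rewrite /core_op; gsimpl.
Qed.

Lemma simply_connected_commg_central :
  simply_connected (@core_op gT) -> forall a b u, commute [~ a, b] u.
Proof.
move=> sc a b u.
have monodromy_step g z t :
    core_op g (core_op z^-1 (core_op 1 (core_op z t))) = g * t * g.
  by rewrite /core_op; gsimpl.
have := simply_connected_commutator_loop sc core_adjoint_cocycle a b u.
by rewrite /= !monodromy_step /commute /commg /conjg => {2}<-; gsimpl.
Qed.

Section ClassTwo.
Hypothesis commg_central : forall a b u, commute [~ a, b] u.
Local Notation der := [~: [set: gT], [set: gT]].

Lemma der_central c u : c \in der -> commute c u.
Proof.
have der_sub : der \subset 'C[u].
  by rewrite gen_subG; apply/subsetP => _ /imset2P[x y _ _ ->]; apply/cent1P.
by move/(subsetP der_sub)/cent1P.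
Qed.

Lemma conjg_commg x y z : [~ x, y] ^ z = [~ x, y].
Proof. by rewrite conjgE (commg_central x y z) mulKg. Qed.

Lemma commMg_central x y z : [~ x * y, z] = [~ x, z] * [~ y, z].
Proof. by rewrite commMgJ conjg_commg. Qed.

Lemma commgM_central x y z : [~ x, y * z] = [~ x, y] * [~ x, z].
Proof. by rewrite commgMJ conjg_commg commg_central. Qed.

Lemma simply_connected_commg_exp4 :
  simply_connected (@core_op gT) -> forall a b, [~ a, b] ^+ 4 = 1.
Proof.
apply: simply_connected_alt_form_exp4 => [x y z | x y z | x | x y z w].
- exact: commMg_central.
- exact: commgM_central.
- exact: commgg.
- exact: commg_central.
Qed.

Lemma core_reach_sqr_der z :
  lreach (@core_op gT) 1 z -> exists w, exists2 c, c \in der & z = w ^+ 2 * c.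
Proof.
have sqr_der_core_op x w c : c \in der ->
    exists w', exists2 c', c' \in der & core_op x (w ^+ 2 * c) = w' ^+ 2 * c'.
  move=> c_der; exists (x * w^-1); exists ([~ w^-1, x] * c^-1).
    by rewrite groupM ?groupV // mem_commg ?inE.
  rewrite /core_op /commg /conjg expgS expg1 !invMg.
  have cc u : commute c^-1 u by apply/commute_sym/commuteV/commute_sym/der_central.
  by rewrite mulgA -(cc x) -!mulgA (cc _); gsimpl.
elim=> [|x b _ [w [c c_der ->]] | x b _ [w [c c_der bE]]].
- by exists 1, 1; rewrite ?group1 ?expg1n ?mulg1.
- exact: sqr_der_core_op.
- by rewrite -(core_opK x b) bE; apply: sqr_der_core_op.
Qed.

End ClassTwo.

Lemma simply_connected_commg1 :
  simply_connected (@core_op gT) -> forall a b, [~ a, b] = 1.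
Proof.
move=> sc; have central := simply_connected_commg_central sc.
have commg_sqr a b : exists w, [~ a, b] = [~ w, b] ^+ 2.
  have [w [c c_der ->]] := core_reach_sqr_der central (sc.1.2 1 a).
  have /commgP/eqP c_b : commute c b by exact: der_central.
  by exists w; rewrite !(commMg_central central) c_b mulg1 expgS expg1.
move=> a b; have [w ->] := commg_sqr a b; have [w' ->] := commg_sqr w b.
by rewrite -expgM simply_connected_commg_exp4.
Qed.

End SimplyConnectedCore.

Lemma sqr_surj_odd_card (gT : finGroupType) :
  (forall z : gT, exists w, z = w ^+ 2) -> odd #|gT|.
Proof.
move=> sqr_surj; apply/negPn/negP => even_card.
have two_dvd : 2 %| #|[set: gT]| by rewrite cardsT dvdn2.
have [t _ t_order] := Cauchy (isT : prime 2) two_dvd.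
have sqr_inj : {in [set: gT] &, injective (fun w : gT => w ^+ 2)}.
  apply/image_injP; rewrite eqn_leq leq_image_card /=.
  by apply/subset_leq_card/subsetP => z _; have [w ->] := sqr_surj z; apply: image_f.
have t1 : t = 1 by apply: sqr_inj; rewrite ?inE // expg1n -t_order expg_order.
by move: t_order; rewrite t1 order1.
Qed.

Lemma simply_connected_odd_card (gT : finGroupType) :
  simply_connected (@core_op gT) -> odd #|gT|.
Proof.
move=> sc; apply: sqr_surj_odd_card => z.
have central := simply_connected_commg_central sc.
have [w [c c_der ->]] := core_reach_sqr_der central (sc.1.2 1 z).
have der1 : [~: [set: gT], [set: gT]] \subset [1].
  rewrite gen_subG; apply/subsetP => _ /imset2P[x y _ _ ->].
  by rewrite simply_connected_commg1 ?inE.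
by exists w; move/(subsetP der1)/set1gP: c_der => ->; rewrite mulg1.
Qed.

Lemma cycle_dprod_coord (gT : finGroupType) (x y : gT) (R : {set gT}) p :
    <[x]> \x (<[y]> \x R) = [set: gT] -> p %| #[x] -> 1 < p ->
  exists alpha : gT -> 'Z_p,
    [/\ {morph alpha : u v / u * v >-> (u + v)%R}, alpha x = 1%R & alpha y = 0%R].
Proof.
move=> defG p_dvd p_gt1.
have [[_ K _ defK] _ _ _] := dprodP defG; rewrite defK in defG.
have [[_ R' _ defR] mulYR _ _] := dprodP defK; rewrite defR in mulYR.
have y_K : y \in K by apply: (subsetP (mulG_sub mulYR).1); apply: cycle_id.
have p_ord : #[Zp1 : 'Z_p] %| #[x] by rewrite order_Zp1 Zp_cast.
have cent : trivm K @* K \subset 'C(eltm p_ord @* <[x]>) by rewrite morphim_trivm sub1G.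
exists (dprodm defG cent); split.
- by move=> u v; rewrite morphM ?inE.
- by rewrite dprodmEl ?cycle_id //; apply: eltm_id.
- by rewrite dprodmEr.
Qed.

Lemma abelian_noncyclic_coords (gT : finGroupType) :
    abelian [set: gT] -> ~~ cyclic [set: gT] ->
  exists2 p, prime p & p %| #|gT| /\
    exists (alpha beta : gT -> 'Z_p) (x y : gT),
      [/\ {morph alpha : u v / u * v >-> (u + v)%R},
          {morph beta : u v / u * v >-> (u + v)%R},
          alpha x = 1%R /\ alpha y = 0%R & beta x = 0%R /\ beta y = 1%R].
Proof.
move=> abG noncyclic; have [b defG b_type] := abelian_structure abG.
have : 1 < size b.
  by rewrite -(size_map order) b_type size_abelian_type // ltnNge -abelian_rank1_cyclic.
case: b defG b_type => [|x [|y r]] // defG b_type _.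
have := abelian_type_dvdn_sorted [set: gT]; have := abelian_type_gt1 [set: gT].
rewrite -b_type /= => /and3P[_ y_gt1 _] /andP[y_dvd_x _].
have p_prime := pdiv_prime y_gt1; have p_gt1 := prime_gt1 p_prime.
have p_dvd_y : pdiv #[y] %| #[y] := pdiv_dvd _.
rewrite !big_cons in defG.
have defG' : <[y]> \x (<[x]> \x \big[dprod/1]_(z <- r) <[z]>) = [set: gT].
  by rewrite dprodA (dprodC <[y]>) -dprodA.
have [alpha [alphaM alpha_x alpha_y]] :=
  cycle_dprod_coord defG (dvdn_trans p_dvd_y y_dvd_x) p_gt1.
have [beta [betaM beta_y beta_x]] := cycle_dprod_coord defG' p_dvd_y p_gt1.
exists (pdiv #[y]) => //; split.
  by rewrite (dvdn_trans p_dvd_y) // -cardsT order_dvdG ?inE.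
by exists alpha, beta, x, y.
Qed.

Lemma simply_connected_cyclic (gT : finGroupType) :
  simply_connected (@core_op gT) -> cyclic [set: gT].
Proof.
move=> sc; apply: contraT => noncyclic.
have abG : abelian [set: gT].
  by apply/centsP => u _ v _; apply/commgP/eqP/simply_connected_commg1.
have [p p_prime [p_dvd [alpha [beta [x [y]]]]]] :=
  abelian_noncyclic_coords abG noncyclic.
case=> alphaM betaM [alpha_x alpha_y] [beta_x beta_y].
pose form u v : 'Z_p := (alpha u * beta v - alpha v * beta u)%R.
have mulZpE (s t : 'Z_p) : s * t = (s + t)%R := erefl.
have form_exp4 : form x y ^+ 4 = 1.
  apply: (simply_connected_alt_form_exp4 (form := form) _ _ _ _ sc)
    => [u v w | u v w | u | u v w z].
  - by rewrite /form alphaM betaM mulZpE; ring.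
  - by rewrite /form alphaM betaM mulZpE; ring.
  - by rewrite /form /= GRing.subrr.
  - exact: Zp_mulgC.
have four_eq0 : (4%:R : 'Z_p)%R = 0%R.
  move: form_exp4; rewrite /form alpha_x alpha_y beta_x beta_y.
  by rewrite GRing.mulr1 GRing.mul0r GRing.subr0.
have p_dvd4 : p %| 4 by rewrite /dvdn -(val_Zp_nat (prime_gt1 p_prime)) four_eq0.
have : coprime p #|gT|.
  apply: coprime_dvdl p_dvd4 _; rewrite -[4]/(2 ^ 2)%N coprimeXl //.
  by rewrite coprime2n simply_connected_odd_card.
by rewrite prime_coprime ?p_dvd.
Qed.

Lemma inj_surj_inverse (A B : Type) (f : A -> B) :
  injective f -> (forall b, exists a, f a = b) -> {f' | cancel f f' & cancel f' f}.
Proof.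
move=> f_inj f_surj.
pose f' b := proj1_sig (constructive_indefinite_description _ (f_surj b)).
have f'K : cancel f' f.
  by move=> b; rewrite /f'; case: constructive_indefinite_description.
by exists f' => // a; apply: f_inj; rewrite f'K.
Qed.

Lemma sqr_half_exp (gT : finGroupType) (z : gT) :
  odd #|gT| -> (z ^+ uphalf #|gT|) ^+ 2 = z.
Proof.
move=> odd_G; rewrite -expgM muln2 uphalfK odd_G.
by rewrite expgS -cardsT expg_cardG ?inE // mulg1.
Qed.

Section CyclicOddTrivialization.
Variables (gT : finGroupType) (g : gT).
Hypothesis g_gen : <[g]> = [set: gT].
Hypothesis odd_G : odd #|gT|.
Variables (S : Type) (theta : gT -> gT -> S -> S).
Hypothesis theta_cocycle : quandle_cocycle (@core_op gT) theta.
Implicit Types (x y z : gT) (p q : gT * S) (t : S).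

Local Notation n := #|gT|.
Let h := g ^+ uphalf n.

Let mem_gen y : y \in <[g]>. Proof. by rewrite g_gen inE. Qed.

Let commG x y : commute x y.
Proof. exact: (centsP (cycle_abelian g)). Qed.

Let h_sqr : h * h = g. Proof. by rewrite -[RHS](sqr_half_exp g odd_G) expgS expg1. Qed.

Definition lift x p := (core_op x p.1, theta x p.1 p.2).

Lemma lift_sd x y p : lift (core_op x y) (lift x p) = lift x (lift y p).
Proof.
case: p => z t; rewrite /lift /= -core_op_sd; congr pair.
by case: theta_cocycle => _ theta_sd _; apply: theta_sd.
Qed.

Lemma lift_fix x t : lift x (x, t) = (x, t).
Proof. by rewrite /lift /= core_opxx; case: theta_cocycle => _ _ ->. Qed.

Lemma lift_inj x : injective (lift x).
Proof.
case=> [z1 t1] [z2 t2] [/(can_inj (core_opK x)) z12]; subst z2.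
by case: theta_cocycle => /(_ x z1) /bij_inj theta_inj _ _ /theta_inj ->.
Qed.

Lemma lift_surj x q : exists p, lift x p = q.
Proof.
case: q => z t; case: theta_cocycle => /(_ x (core_op x z)) [theta' _ theta'K] _ _.
by exists (core_op x z, theta' t); rewrite /lift /= core_opK theta'K.
Qed.

Definition sq_lift p := lift 1 (lift 1 p).

Lemma lift2_commute x y p : lift x (lift x (lift y p)) = lift y (lift x (lift x p)).
Proof. by rewrite -[lift x (lift y p)]lift_sd -lift_sd core_opK. Qed.

Lemma lift2_core x y q : lift (core_op x y) (lift (core_op x y) q) = lift y (lift y q).
Proof. by have [p <-] := lift_surj x q; rewrite !lift_sd lift2_commute. Qed.

Lemma lift2E z p : lift z (lift z p) = sq_lift p.
Proof.
have root : core_op (z ^+ uphalf n) 1 = z.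
  by rewrite /core_op invg1 mulg1 -[RHS](sqr_half_exp z odd_G) expgS expg1.
by rewrite -{1 2}root lift2_core.
Qed.

Lemma lift_sq_lift y p : lift y (sq_lift p) = sq_lift (lift y p).
Proof. by rewrite /sq_lift lift2_commute. Qed.

Lemma sq_lift_fix t : sq_lift (1, t) = (1, t).
Proof. by rewrite /sq_lift !lift_fix. Qed.

Definition shift p := lift h (lift 1 p).
Definition unshift p := lift h^-1 (lift 1 p).

Lemma core_op_shift z : core_op h (core_op 1 z) = g * z.
Proof. by rewrite core_op_twist -mulgA (commG z) mulgA h_sqr. Qed.

Lemma shift_lift z p : shift (lift z p) = lift (g * z) (shift p).
Proof. by rewrite /shift -[lift 1 (lift z p)]lift_sd -lift_sd core_op_shift. Qed.

Lemma iter_shift_lift k z p :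
  iter k shift (lift z p) = lift (g ^+ k * z) (iter k shift p).
Proof. by elim: k => [|k IHk] /=; rewrite ?mul1g // IHk shift_lift expgS mulgA. Qed.

Lemma lift1_shift p : lift 1 (shift p) = unshift (lift 1 p).
Proof. by rewrite /shift /unshift -lift_sd core_op1. Qed.

Lemma lift1_unshift p : lift 1 (unshift p) = shift (lift 1 p).
Proof. by rewrite /shift /unshift -lift_sd core_op1 invgK. Qed.

Lemma lift1_iter_shift k p : lift 1 (iter k shift p) = iter k unshift (lift 1 p).
Proof. by elim: k => [|k IHk] //=; rewrite lift1_shift IHk. Qed.

Lemma shift_unshift p : shift (unshift p) = sq_lift (sq_lift p).
Proof. by rewrite {1}/shift lift1_unshift /shift !lift2E. Qed.

Lemma iter_shift_sq_lift k p : iter k shift (sq_lift p) = sq_lift (iter k shift p).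
Proof. by elim: k => [|k IHk] //=; rewrite IHk /shift !lift_sq_lift. Qed.

Lemma iter_shift_unshift k t : iter k shift (iter k unshift (1, t)) = (1, t).
Proof.
suff -> : iter k shift (iter k unshift (1, t)) = iter k (sq_lift \o sq_lift) (1, t).
  by elim: k => [|k IHk] //=; rewrite IHk !sq_lift_fix.
elim: k (1, t) => [|k IHk] p //=.
by rewrite -iterS iterSr shift_unshift !iter_shift_sq_lift IHk.
Qed.

Lemma iter_shift_inj k : injective (iter k shift).
Proof. by elim: k => [|k IHk] p q //= /lift_inj /lift_inj /IHk. Qed.

Lemma iter_shift_fst k p : (iter k shift p).1 = g ^+ k * p.1.
Proof.
elim: k => [|k IHk]; first by rewrite mul1g.
by rewrite iterS /= core_op_shift IHk expgS mulgA.
Qed.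

Lemma lift_gen t : lift g (1, t) = iter 2 shift (1, t).
Proof.
have := shift_lift 1 (unshift (1, t)).
by rewrite mulg1 shift_unshift !sq_lift_fix lift1_unshift lift_fix => /esym.
Qed.

Lemma iter_shift_period t : iter n shift (1, t) = (1, t).
Proof.
(* With m = (n + 1) / 2, shift^(n + 2) = shift^m \o lift h \o lift 1 \o shift^m.
   On (1, t), lift 1 turns the right shift^m into unshift^m and lift h passes the
   left one as lift (g^m * h) = lift g, which is shift^2 there by lift_gen. *)
apply: (@iter_shift_inj 2); rewrite -iterD addnC -lift_gen.
have -> : (n + 2 = uphalf n + (1 + uphalf n))%N.
  by rewrite addnCA addnn uphalfK odd_G add1n addn2.
rewrite iterD iterD /= {2}/shift lift1_iter_shift lift_fix iter_shift_lift.
by rewrite iter_shift_unshift -/h h_sqr.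
Qed.

Lemma iter_shift_expg a b t :
  g ^+ a = g ^+ b -> iter a shift (1, t) = iter b shift (1, t).
Proof.
have iter_shift_mod c : iter c shift (1, t) = iter (c %% n) shift (1, t).
  rewrite {1}(divn_eq c n) addnC iterD; congr iter.
  by elim: (c %/ n) => [|k IHk] //; rewrite mulSn iterD IHk iter_shift_period.
move/eqP; rewrite eq_expg_mod_order orderE g_gen cardsT => /eqP ab.
by rewrite iter_shift_mod ab -iter_shift_mod.
Qed.

Lemma lift_iter_shift j m t :
  iter m shift (lift (g ^+ j) (iter (j + m) shift (1, t))) = iter j shift (1, t).
Proof.
rewrite iterD -[g ^+ j]mulg1 -iter_shift_lift lift1_iter_shift lift_fix.
by rewrite -iterD addnC iterD iter_shift_unshift.
Qed.

Definition dlog y := s2val (cyclePmin (mem_gen y)).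

Lemma expg_dlog y : g ^+ dlog y = y.
Proof. by rewrite /dlog; case: cyclePmin => i _ /= ->. Qed.

Let expg_pred_card x : x ^+ n.-1 = x^-1.
Proof.
have n_gt0 : 0 < n by rewrite -cardsT cardG_gt0.
apply/eqP; rewrite eq_sym eq_invg_mul -expgS prednK //.
by rewrite -cardsT expg_cardG ?inE.
Qed.

Definition lift_section y t := iter (dlog y) shift (1, t).

Definition gamma y t := (lift_section y t).2.

Lemma lift_sectionE y t : lift_section y t = (y, gamma y t).
Proof. by rewrite [LHS]surjective_pairing iter_shift_fst mulg1 expg_dlog. Qed.

Lemma lift_section_lift x y t :
  lift x (lift_section y t) = lift_section (core_op x y) t.
Proof.
set j := dlog x; set m := (dlog y + j * n.-1)%N.
have gm : g ^+ m = y * x^-1 by rewrite expgD expgM expg_dlog expg_dlog expg_pred_card.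
apply: (@iter_shift_inj m).
have -> : lift_section y t = iter (j + m) shift (1, t).
  by apply: iter_shift_expg; rewrite expgD gm /j !expg_dlog mulgA (commG x) mulgK.
rewrite -{1}(expg_dlog x) lift_iter_shift -iterD; apply: iter_shift_expg.
by rewrite expgD gm !expg_dlog /core_op !mulgA mulgKV mulgV mul1g.
Qed.

Lemma gamma_inj y : injective (gamma y).
Proof.
move=> t1 t2 gamma_eq.
have : lift_section y t1 = lift_section y t2 by rewrite !lift_sectionE gamma_eq.
by move/iter_shift_inj => [].
Qed.

Lemma iter_shift_surj k q : exists p, iter k shift p = q.
Proof.
elim: k q => [|k IHk] q; first by exists q.
have [r <-] := lift_surj h q; have [r' <-] := lift_surj 1 r.
by have [p <-] := IHk r'; exists p.
Qed.

Lemma gamma_surj y s : exists t, gamma y t = s.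
Proof.
have [p p_eq] := iter_shift_surj (dlog y) (y, s).
have p1 : p.1 = 1.
  by apply: (@mulgI _ (g ^+ dlog y)); rewrite -iter_shift_fst p_eq mulg1 expg_dlog.
by exists p.2; rewrite /gamma /lift_section -p1 -surjective_pairing p_eq.
Qed.

Lemma cyclic_odd_cohomologous_trivial : cohomologous_trivial (@core_op gT) theta.
Proof.
pose gamma_inv y := s2val (inj_surj_inverse (@gamma_inj y) (gamma_surj y)).
exists gamma, gamma_inv; split=> [y | y | x y s]; rewrite /gamma_inv.
- by case: inj_surj_inverse.
- by case: inj_surj_inverse.
have := lift_section_lift x y (gamma_inv y s); rewrite !lift_sectionE /gamma_inv.
by case: inj_surj_inverse => /= f' _ f'K; rewrite f'K => -[].
Qed.

End CyclicOddTrivialization.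

Lemma core_connected (gT : finGroupType) :
  abelian [set: gT] -> odd #|gT| -> quandle_connected (@core_op gT).
Proof.
move=> abG odd_G; split=> [|a b]; first exact: core_quandle.
have -> : b = core_op ((b * a) ^+ uphalf #|gT|) a.
  have := sqr_half_exp (b * a) odd_G; rewrite expgS expg1 => root.
  have commA : commute a^-1 ((b * a) ^+ uphalf #|gT|).
    by apply: (centsP abG); rewrite inE.
  by rewrite /core_op -mulgA commA mulgA root mulgK.
by apply: lreach_L; apply: lreach_refl.
Qed.

Theorem cyclic_odd_simply_connected (gT : finGroupType) :
  cyclic [set: gT] -> odd #|gT| -> simply_connected (@core_op gT).
Proof.
move=> /cyclicP[g g_gen] odd_G; split.
  by apply: core_connected odd_G; rewrite g_gen cycle_abelian.
move=> S theta theta_cocycle.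
exact: (cyclic_odd_cohomologous_trivial (esym g_gen) odd_G theta_cocycle).
Qed.

Theorem corollary4p8 (gT : finGroupType) :
  simply_connected (@core_op gT) <-> (cyclic [set: gT] /\ odd #|[set: gT]|).
Proof.
rewrite cardsT; split=> [sc | [cyclic_G odd_G]].
  by split; [apply: simply_connected_cyclic | apply: simply_connected_odd_card].
exact: cyclic_odd_simply_connected.
Qed.
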